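(* Let $K\subset\mathbb{R}^m$ be a pointed, closed, convex cone with nonempty interior which is finitely generated, let $C\subset\mathbb{R}^m$ be a finite set with $0\notin C$ and $K^*=\operatorname{cone}(\operatorname{conv}(C))$, and let $F:\mathbb{R}^n\to\mathbb{R}^m$ be continuously differentiable. Define $h(x,d)=\max\{\langle JF(x)d,w\rangle : w\in C\}$ and $v(x)=\arg\min_{d}\{h(x,d)+\tfrac12\|d\|^2\}$. Fix $0<\rho<1$, $0<\delta<1$, $\mu>2$, and $e\in\operatorname{int}(K)$ with $\langle w,e\rangle\le1$ for all $w\in C$. Let $x^0\in\mathbb{R}^n$ and assume: (A1) there is an open set $\Lambda$ containing $\mathcal{L}=\{x: F(x)\preceq_K F(x^0)\}$ such that $\|JF(x)-JF(y)\|\le L\|x-y\|$ for all $x,y\in\Lambda$; (A2) every sequence $\{D_k\}\subset F(\mathcal{L})$ with $D_{k+1}\preceq_K D_k$ for all $k$ admits $D\in\mathbb{R}^m$ with $D\preceq_K D_k$ for all $k$. Let $\{x^k\}$ be an infinite sequence generated as follows: $d^0=v(x^0)$; for $k\ge1$, $d^k=v(x^k)+\beta_k d^{k-1}$ with $$\beta_k=\frac{-h(x^k,v(x^k))\big(|h(x^{k-1},v(x^k))|+h(x^{k-1},v(x^k))\big)}{\max\big\{\mu|h(x^k,d^{k-1})h(x^{k-1},v(x^k))|,\ -\mu h(x^{k-1},v(x^{k-1}))|h(x^{k-1},v(x^k))|\big\}};$$ $x^{k+1}=x^k+\alpha_kd^k$, where, with $\tau_k=-h(x^k,d^k)/\|d^k\|^2$,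 $\alpha_k$ is the largest element of $\{\tau_k,\delta\tau_k,\delta^2\tau_k,\dots\}$ satisfying the Armijo condition $$F(x^k+\alpha_kd^k)\preceq_K F(x^k)+\rho\alpha_k h(x^k,d^k)e.$$ Then $$\sum_{k\ge0}\frac{h^2(x^k,d^k)}{\|d^k\|^2}<\infty.$$
   Context: $u\preceq_K v$ means $v-u\in K$. $K^*$ is the positive polar cone of $K$ and $JF$ the Jacobian of $F$. The sequence is assumed infinite, i.e. $v(x^k)\neq0$ for all $k$ (equivalently no $x^k$ is a $K$-Pareto critical point). *)

From HB Require Import structures.
From mathcomp Require Import all_boot all_order all_algebra.
From mathcomp Require Import all_classical all_reals all_analysis.
Set Implicit Arguments. Unset Strict Implicit. Unset Printing Implicit Defensive.
Import Order.TTheory GRing.Theory Num.Theory.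
Import numFieldNormedType.Exports.
Local Open Scope classical_set_scope.
Local Open Scope ring_scope.

Section Defs.
Variable R : realType.

Definition dot {p : nat} (u w : 'cV[R]_p) : R := \sum_(i < p) u i 0 * w i 0.
Definition enorm {p : nat} (u : 'cV[R]_p) : R := Num.sqrt (dot u u).

Definition preceqK {p : nat} (K : set 'cV[R]_p) (u v : 'cV[R]_p) : Prop := K (v - u).

Definition is_convex_set {p : nat} (K : set 'cV[R]_p) : Prop :=
  forall u w (t : R), K u -> K w -> 0 <= t <= 1 -> K (t *: u + (1 - t) *: w).

Definition pointed_cone {p : nat} (K : set 'cV[R]_p) : Prop :=
  forall u, K u -> K (- u) -> u = 0.

Definition finitely_generated_cone {p : nat} (K : set 'cV[R]_p) : Prop :=
  exists G : seq 'cV[R]_p,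
    K = [set u | exists lam : 'I_(size G) -> R,
                  (forall i, 0 <= lam i) /\ u = \sum_(i < size G) lam i *: G`_i].

Definition dual_cone {p : nat} (K : set 'cV[R]_p) : set 'cV[R]_p :=
  [set w | forall u, K u -> 0 <= dot w u].

Definition conv_hull {p : nat} (C : seq 'cV[R]_p) : set 'cV[R]_p :=
  [set y | exists lam : 'I_(size C) -> R,
     [/\ forall i, 0 <= lam i, \sum_(i < size C) lam i = 1 &
         y = \sum_(i < size C) lam i *: C`_i]].

Definition cone_of {p : nat} (S : set 'cV[R]_p) : set 'cV[R]_p :=
  [set u | exists t : R, exists y, 0 <= t /\ S y /\ u = t *: y].

Definition hfun {n m : nat} (JF : 'cV[R]_n -> 'M[R]_(m, n)) (C : seq 'cV[R]_m)
  (x d : 'cV[R]_n) : R :=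
  \big[Num.max/ dot (JF x *m d) (head 0 C)]_(w <- C) dot (JF x *m d) w.

Definition armijo {n m : nat} (K : set 'cV[R]_m) (F : 'cV[R]_n -> 'cV[R]_m)
  (JF : 'cV[R]_n -> 'M[R]_(m, n)) (C : seq 'cV[R]_m) (rho : R) (e : 'cV[R]_m)
  (x d : 'cV[R]_n) (a : R) : Prop :=
  preceqK K (F (x + a *: d)) (F x + (rho * a * hfun JF C x d) *: e).

End Defs.

(** Membership in K is tested on the finitely many functionals of C: K is closed and
    K^* = cone (conv C), so by the bipolar theorem y lies in K as soon as <w, y> >= 0
    for every w in C.  Along a ray x + t d, the mean value theorem and the Lipschitz
    bound on JF then show that every step t <= (1 - rho) tau / M, with
    tau = -h(x,d) / |d|^2, satisfies the Armijo condition (the segment stays in Lambda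
    because Armijo steps stay in the level set), so backtracking returns
    alpha_k >= c tau_k.  The hybrid parameter satisfies
    beta_k h(x^k, d^(k-1)) <= 2 (-h(x^k, v(x^k))) / mu with mu > 2, so each d^k is a
    descent direction.  For a generator w with <w, e> > 0 the Armijo inequality gives
    c rho <w, e> h(x^k, d^k)^2 / |d^k|^2 <= <w, F x^k> - <w, F x^(k+1)>; this
    telescopes, and (A2) bounds <w, F x^k> from below. *)

From HB Require Import structures.
From mathcomp Require Import all_boot all_order all_algebra.
From mathcomp Require Import all_classical all_reals all_analysis.
From mathcomp Require Import ring lra.
Import Order.TTheory GRing.Theory Num.Theory.
Import numFieldNormedType.Exports.
Local Open Scope classical_set_scope.
Local Open Scope ring_scope.

Section EuclideanDot.
Context {R : realType} {p : nat}.
Implicit Types (u w y : 'cV[R]_p) (a : R).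

Lemma dotC u w : dot u w = dot w u.
Proof. by apply: eq_bigr => i _; rewrite mulrC. Qed.

Lemma dotDr u w y : dot u (w + y) = dot u w + dot u y.
Proof. by rewrite /dot -big_split; apply: eq_bigr => i _; rewrite !mxE mulrDr. Qed.

Lemma dotZr a u w : dot u (a *: w) = a * dot u w.
Proof. by rewrite /dot mulr_sumr; apply: eq_bigr => i _; rewrite !mxE mulrCA. Qed.

Lemma dotNr u w : dot u (- w) = - dot u w.
Proof. by rewrite -scaleN1r dotZr mulN1r. Qed.

Lemma dotBr u w y : dot u (w - y) = dot u w - dot u y.
Proof. by rewrite dotDr dotNr. Qed.

Lemma dot0r u : dot u 0 = 0.
Proof. by rewrite -(scale0r 0) dotZr mul0r. Qed.

Lemma dotDl u w y : dot (w + y) u = dot w u + dot y u.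
Proof. by rewrite dotC dotDr !(dotC u). Qed.

Lemma dotZl a u w : dot (a *: u) w = a * dot u w.
Proof. by rewrite dotC dotZr dotC. Qed.

Lemma dotNl u w : dot (- u) w = - dot u w.
Proof. by rewrite dotC dotNr dotC. Qed.

Lemma dotBl u w y : dot (w - y) u = dot w u - dot y u.
Proof. by rewrite dotC dotBr !(dotC u). Qed.

Lemma dot0l u : dot 0 u = 0.
Proof. by rewrite dotC dot0r. Qed.

Lemma dot_suml n (f : 'I_n -> 'cV[R]_p) y :
  dot (\sum_(k < n) f k) y = \sum_(k < n) dot (f k) y.
Proof.
elim: n f => [|n IH] f; first by rewrite !big_ord0 dot0l.
by rewrite !big_ord_recr /= dotDl IH.
Qed.

Lemma sqr_coord_le_dot u i : u i 0 ^+ 2 <= dot u u.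
Proof.
rewrite /dot (bigD1 i) //= -expr2 lerDl.
by apply: sumr_ge0 => j _; rewrite -expr2 sqr_ge0.
Qed.

Lemma dot_ge0 u : 0 <= dot u u.
Proof. by apply: sumr_ge0 => i _; rewrite -expr2 sqr_ge0. Qed.

Lemma dot_gt0 u : (0 < dot u u) = (u != 0).
Proof.
apply/idP/idP => [|u0]; first by apply: contraTneq => ->; rewrite dot0r ltxx.
rewrite lt_def dot_ge0 andbT; apply: contraNneq u0 => uu0.
apply/eqP/matrixP => i j; rewrite ord1 mxE; apply/eqP.
by rewrite -sqrf_eq0 eq_le sqr_ge0 andbT -uu0 sqr_coord_le_dot.
Qed.

Lemma enorm_ge0 u : 0 <= enorm u.
Proof. exact: sqrtr_ge0. Qed.

Lemma enorm_sqr u : enorm u ^+ 2 = dot u u.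
Proof. by rewrite sqr_sqrtr // dot_ge0. Qed.

Lemma enorm0 : enorm (0 : 'cV[R]_p) = 0.
Proof. by rewrite /enorm dot0r sqrtr0. Qed.

Lemma enormZ a u : enorm (a *: u) = `|a| * enorm u.
Proof. by rewrite /enorm dotZl dotZr mulrA -expr2 sqrtrM ?sqrtr_sqr ?sqr_ge0. Qed.

Lemma coord_le_enorm u i : `|u i 0| <= enorm u.
Proof. by rewrite -sqrtr_sqr ler_sqrt ?dot_ge0 ?sqr_coord_le_dot. Qed.

Lemma cauchy_schwarz u w : dot u w <= enorm u * enorm w.
Proof.
have [->|w0] := eqVneq w 0; first by rewrite dot0r enorm0 mulr0.
have ww0 : 0 < dot w w by rewrite dot_gt0.
have uw_sqr : dot u w ^+ 2 <= dot u u * dot w w.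
  (* 0 <= |u - t w|^2 at t = <u, w> / <w, w> *)
  have := dot_ge0 (u - (dot u w / dot w w) *: w).
  rewrite !dotBl !dotBr !dotZl !dotZr (dotC w u) divfK ?gt_eqF // subrr subr0 => H.
  rewrite -subr_ge0 (_ : _ - _ = dot w w * (dot u u - dot u w / dot w w * dot u w)).
    exact: mulr_ge0 (ltW ww0) H.
  by field; rewrite gt_eqF.
have [uw_le0|uw_gt0] := lerP (dot u w) 0.
  by apply: le_trans uw_le0 _; rewrite mulr_ge0 ?enorm_ge0.
rewrite -[dot u w]ger0_norm ?(ltW uw_gt0) // -sqrtr_sqr /enorm -sqrtrM ?dot_ge0 //.
by rewrite ler_sqrt ?mulr_ge0 ?dot_ge0.
Qed.

Lemma continuous_dot (T : topologicalType) (f g : T -> 'cV[R]_p) :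
  continuous f -> continuous g -> continuous (fun t => dot (f t) (g t)).
Proof.
move=> fc gc; apply: continuous_big => [|i _ t]; first exact: add_continuous.
have fi := continuous_comp (fc t) (@coord_continuous _ _ _ i 0 (f t)).
have gi := continuous_comp (gc t) (@coord_continuous _ _ _ i 0 (g t)).
exact: continuousM fi gi.
Qed.

End EuclideanDot.

Section FinitelyGeneratedCone.
Context {R : realType} {p : nat} {K : set 'cV[R]_p}.
Implicit Types u w y : 'cV[R]_p.
Hypothesis fgK : finitely_generated_cone K.

Lemma cone0 : K 0.
Proof.
case: fgK => G ->; exists (fun=> 0); split => //.
by rewrite big1 // => i _; rewrite scale0r.
Qed.

Lemma coneD {u w} : K u -> K w -> K (u + w).
Proof.
case: fgK => G -> [l1 [l1_ge0 ->]] [l2 [l2_ge0 ->]].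
exists (fun i => l1 i + l2 i); split; first by move=> i; rewrite addr_ge0.
by rewrite -big_split; apply: eq_bigr => i _; rewrite scalerDl.
Qed.

Lemma coneZ {a : R} {u} : 0 <= a -> K u -> K (a *: u).
Proof.
case: fgK => G -> a0 [l [l_ge0 ->]].
exists (fun i => a * l i); split; first by move=> i; rewrite mulr_ge0.
by rewrite scaler_sumr; apply: eq_bigr => i _; rewrite scalerA.
Qed.

Lemma preceqK_refl u : preceqK K u u.
Proof. by rewrite /preceqK subrr; exact: cone0. Qed.

Lemma preceqK_trans {u w y} : preceqK K u w -> preceqK K w y -> preceqK K u y.
Proof. by rewrite /preceqK => uw wy; have := coneD wy uw; rewrite addrA subrK. Qed.

Lemma preceqK_addl_scale e u (c : R) : K e -> c <= 0 -> preceqK K (u + c *: e) u.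
Proof.
by move=> Ke c_le0; rewrite /preceqK opprD addNKr -scaleNr; apply: coneZ; rewrite ?oppr_ge0.
Qed.

End FinitelyGeneratedCone.

Section NearestPoint.
Context {R : realType} {p : nat}.
Implicit Types (y q k : 'cV[R]_p).

Lemma trmx_continuous m n : continuous (@trmx R m n).
Proof.
move=> u A /nbhs_ballP[e /= e0 eA]; apply/nbhs_ballP; exists e => //= w [_ uw].
by apply: eA; split => // i j; rewrite !mxE; exact: uw.
Qed.

Lemma closed_nearest_point {K : set 'cV[R]_p} {k0} y : closed K -> K k0 ->
  exists2 q, K q & forall k, K k -> dot (y - q) (y - q) <= dot (y - k) (y - k).
Proof.
move=> Kcl Kk0.
pose dist2 k := dot (y - k) (y - k).
pose g (r : 'rV[R]_p) := dist2 r^T.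
have gc : continuous g.
  apply: continuous_dot => r;
    by apply: continuousB; [exact: cst_continuous | exact: trmx_continuous].
pose S := [set r | K r^T /\ g r <= dist2 k0].
have Scl : closed S.
  rewrite (_ : S = trmx @^-1` K `&` g @^-1` [set z | z <= dist2 k0]) //.
  apply: closedI; first by apply: preimage_closed => // r _; exact: trmx_continuous.
  by apply: preimage_closed; [move=> r _; exact: gc | exact: closed_le].
have Sb : bounded_set S.
  exists (enorm y + enorm (y - k0)); split; first exact: num_real.
  move=> M yM r [_ gr] /=; apply: le_trans (ltW yM).
  rewrite [`|r|]/Num.norm /= mx_normrE; apply: bigmax_le => [|[i j] _ /=].
    by rewrite addr_ge0 ?enorm_ge0.
  rewrite (ord1 i) (_ : r 0 j = y j 0 - (y - r^T) j 0); last by rewrite !mxE subKr.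
  apply: le_trans (ler_normB _ _) (lerD (coord_le_enorm _ _) _).
  by apply: le_trans (coord_le_enorm _ j) _; rewrite ler_sqrt ?dot_ge0.
have S0 : S !=set0 by exists k0^T; rewrite /S /g /= trmxK.
have [c /[!inE] -[Kc gc_le] cmin] :=
  compact_EVT_min S0 (bounded_closed_compact Sb Scl) (continuous_subspaceT gc).
exists c^T => // k Kk; have [k_near|k_far] := leP (dist2 k) (dist2 k0).
  by have := cmin k^T; rewrite inE /S /g /= trmxK; apply.
exact: le_trans gc_le (ltW k_far).
Qed.

Lemma nonpos_of_twice_le_small_mul (a b : R) :
  (forall t, 0 < t <= 1 -> 2 * a <= t * b) -> a <= 0.
Proof.
move=> small; rewrite leNgt; apply/negP => a0.
have b_ge : 2 * a <= b by have := small 1; rewrite ltr01 lexx mul1r; apply.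
have [b0 ab] : 0 < b /\ a <= b by split; lra.
have := small (a / b); rewrite divr_gt0 // ler_pdivrMr // mul1r ab divfK ?gt_eqF //.
by move=> /(_ isT); lra.
Qed.

Lemma nearest_point_dot_le0 {K : set 'cV[R]_p} {y q k} :
  (forall z, K z -> dot (y - q) (y - q) <= dot (y - z) (y - z)) ->
  (forall t, 0 < t <= 1 -> K (q + t *: k)) -> dot (y - q) k <= 0.
Proof.
move=> qmin qk; apply: (nonpos_of_twice_le_small_mul _ (dot k k)) => t t01.
have t0 : 0 < t by case/andP: t01.
have := qmin _ (qk t t01).
rewrite opprD addrA !dotBl !dotBr !dotZl !dotZr (dotC k y) (dotC k q) => ineq.
by rewrite -(ler_pM2l t0); lra.
Qed.

End NearestPoint.

Section ConvexConicHull.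
Context {R : realType} {p : nat}.
Implicit Types (C : seq 'cV[R]_p) (w y : 'cV[R]_p).

Lemma mem_cone_conv_hull C c : c \in C -> cone_of (conv_hull C) c.
Proof.
move=> cC; exists 1, c; split => //; split; last by rewrite scale1r.
have jlt : (index c C < size C)%N by rewrite index_mem.
pose j := Ordinal jlt; exists (fun i => (i == j)%:R); split.
- by move=> i; exact: ler0n.
- by rewrite (bigD1 j) //= eqxx big1 ?addr0 // => i /negbTE ->.
- rewrite (bigD1 j) //= eqxx scale1r big1 ?addr0 ?nth_index //.
  by move=> i /negbTE ->; rewrite scale0r.
Qed.

Lemma cone_conv_hull_dot_ge0 C w y : cone_of (conv_hull C) w ->
  (forall c, c \in C -> 0 <= dot c y) -> 0 <= dot w y.
Proof.
move=> [t [z [t0 [[l [l0 _ ->]] ->]]]] Cy.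
rewrite dotZl dot_suml mulr_ge0 // sumr_ge0 // => i _.
by rewrite dotZl mulr_ge0 // Cy // mem_nth.
Qed.

Lemma dual_generators_neq_nil {K : set 'cV[R]_p} {C} :
  dual_cone K = cone_of (conv_hull C) -> C != [::].
Proof.
case: C => // Kdual; have : dual_cone K 0 by move=> u _; rewrite dot0l.
by rewrite Kdual => -[_ [_ [_ [[l [_ + _]] _]]]]; rewrite big_ord0 => /eqP; rewrite eq_sym oner_eq0.
Qed.

End ConvexConicHull.

Section EuclideanInterior.
Context {R : realType} {p : nat}.
Implicit Types (w y z : 'cV[R]_p).

Lemma interior_enorm_ball (A : set 'cV[R]_p) z : A° z ->
  exists2 r, 0 < r & forall y, enorm (z - y) < r -> A y.
Proof.
move=> /nbhs_ballP[r r0 zrA]; exists r => // y zy; apply: zrA; split => // i j.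
by rewrite (ord1 j); have := coord_le_enorm (z - y) i; rewrite !mxE => /le_lt_trans; apply.
Qed.

Lemma open_ray {A : set 'cV[R]_p} {z} d : open A -> A z ->
  exists2 r, 0 < r & forall u : R, `|u| < r -> A (z + u *: d).
Proof.
rewrite openE => /[apply] /interior_enorm_ball[r r0 zA].
have d_ge0 := enorm_ge0 d.
exists (r / (1 + enorm d)); first by rewrite divr_gt0 // ltr_wpDr.
move=> u; rewrite ltr_pdivlMr ?ltr_wpDr // => ur; apply: zA.
rewrite opprD addNKr -scaleNr enormZ normrN; apply: le_lt_trans ur.
by rewrite ler_wpM2l // lerDr.
Qed.

Lemma dual_dot_interior_gt0 {K : set 'cV[R]_p} {w e} :
  dual_cone K w -> w != 0 -> K° e -> 0 < dot w e.
Proof.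
move=> Kw w0 /interior_enorm_ball[r r0 eK].
have w_ge0 := enorm_ge0 w.
pose eps := r / (1 + enorm w).
have eps0 : 0 < eps by rewrite divr_gt0 // ltr_wpDr.
have : K (e - eps *: w).
  apply: eK; rewrite opprD opprK addNKr enormZ gtr0_norm //.
  by rewrite /eps mulrAC ltr_pdivrMr ?ltr_wpDr // ltr_pM2l // ltrDr.
move=> /Kw; rewrite dotBr dotZr subr_ge0; apply: lt_le_trans.
by rewrite mulr_gt0 // dot_gt0.
Qed.

Lemma dual_generator_dot_interior_gt0 {K : set 'cV[R]_p} {C e} :
  dual_cone K = cone_of (conv_hull C) -> 0 \notin C -> K° e ->
  exists2 w, w \in C & 0 < dot w e.
Proof.
move=> Kdual C0 e_int; have Cne := dual_generators_neq_nil Kdual.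
have w0C : head 0 C \in C by case: C Kdual C0 Cne => // c s *; exact: mem_head.
exists (head 0 C) => //; apply: (dual_dot_interior_gt0 _ _ e_int).
  by rewrite Kdual; exact: mem_cone_conv_hull.
by apply: contraNneq C0 => <-.
Qed.

End EuclideanInterior.

Section Bipolar.
Context {R : realType} {p : nat} {K : set 'cV[R]_p} {C : seq 'cV[R]_p}.
Hypotheses (fgK : finitely_generated_cone K) (Kcl : closed K)
  (Kdual : dual_cone K = cone_of (conv_hull C)).

Lemma bipolar y : (forall w, w \in C -> 0 <= dot w y) -> K y.
Proof.
(* q is the point of K nearest to y: y - q is polar to K and orthogonal to q, so
   q - y lies in K^* = cone (conv C), and then <q - y, y> >= 0 forces y = q. *)
move=> Cy; have [q Kq qmin] := closed_nearest_point y Kcl (cone0 fgK).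
have q_polar k : K k -> dot (y - q) k <= 0.
  move=> Kk; apply: nearest_point_dot_le0 qmin _ => t /andP[t0 _].
  by apply: (coneD fgK Kq); apply: (coneZ fgK (ltW t0) Kk).
have q_perp : 0 <= dot (y - q) q.
  rewrite -oppr_le0 -dotNr; apply: nearest_point_dot_le0 qmin _ => t /andP[_ t1].
  by rewrite scalerN -{1}[q]scale1r -scalerBl; apply: (coneZ fgK _ Kq); rewrite subr_ge0.
have : dual_cone K (q - y) by move=> k Kk; rewrite -opprB dotNl oppr_ge0 q_polar.
rewrite Kdual => /cone_conv_hull_dot_ge0 /(_ Cy) qy_ge0.
have yq_le0 : dot (y - q) (y - q) <= 0.
  have qy : dot (q - y) y = - dot (y - q) y by rewrite -dotNl opprB.
  by rewrite dotBr; lra.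
by move: yq_le0; rewrite leNgt dot_gt0 negbK subr_eq0 => /eqP ->.
Qed.

End Bipolar.

Section SupportFunction.
Context {R : realType} {n m : nat} (JF : 'cV[R]_n -> 'M[R]_(m, n)) (C : seq 'cV[R]_m).
Implicit Types (z u v : 'cV[R]_n) (w : 'cV[R]_m).

Lemma hfun_ge z u w : w \in C -> dot (JF z *m u) w <= hfun JF C z u.
Proof. by move=> wC; apply: le_bigmax_seq. Qed.

Hypothesis C_neq_nil : C != [::].

Let head_in_C : head 0 C \in C.
Proof. by case: C C_neq_nil => // c s _; exact: mem_head. Qed.

Lemma hfun_le z u b : (forall w, w \in C -> dot (JF z *m u) w <= b) -> hfun JF C z u <= b.
Proof.
move=> ub; rewrite /hfun big_seq; apply: bigmax_le => [|w /ub //].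
exact: ub head_in_C.
Qed.

Lemma hfun0 z : hfun JF C z 0 = 0.
Proof.
apply/le_anti/andP; split; first by apply: hfun_le => w _; rewrite mulmx0 dot0l.
by have := hfun_ge z 0 _ head_in_C; rewrite mulmx0 dot0l.
Qed.

Lemma hfunD z u v : hfun JF C z (u + v) <= hfun JF C z u + hfun JF C z v.
Proof. by apply: hfun_le => w wC; rewrite mulmxDr dotDl lerD ?hfun_ge. Qed.

Lemma hfunZ z (a : R) u : 0 <= a -> hfun JF C z (a *: u) <= a * hfun JF C z u.
Proof. by move=> a0; apply: hfun_le => w wC; rewrite -scalemxAr dotZl ler_wpM2l ?hfun_ge. Qed.

Lemma hfun_argmin_lt0 z v :
  (forall u, hfun JF C z v + 2^-1 * enorm v ^+ 2 <= hfun JF C z u + 2^-1 * enorm u ^+ 2) ->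
  v != 0 -> hfun JF C z v < 0.
Proof.
move=> vmin v0; have := vmin 0; rewrite hfun0 enorm0 expr0n /= mulr0 addr0.
have : 0 < enorm v ^+ 2 by rewrite enorm_sqr dot_gt0.
lra.
Qed.

End SupportFunction.

Section HybridParameter.
Context {R : realType}.

(* beta_(k+1) = hybrid_beta mu h(x^(k+1), v(x^(k+1))) h(x^k, v(x^(k+1)))
                             h(x^(k+1), d^k) h(x^k, v(x^k)) *)
Definition hybrid_beta (mu hv a b c : R) : R :=
  - hv * (`|a| + a) / Num.max (mu * `|b * a|) (- mu * c * `|a|).

Lemma hybrid_beta_bound (mu hv a b c : R) : 0 < mu -> hv < 0 ->
  0 <= hybrid_beta mu hv a b c /\ hybrid_beta mu hv a b c * b <= 2 * - hv / mu.
Proof.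
move=> mu0 hv0; rewrite /hybrid_beta; set M := Num.max _ _.
have M_ge : mu * `|b * a| <= M by rewrite le_max lexx.
have M0 : 0 <= M by apply: le_trans _ M_ge; rewrite mulr_ge0 // ltW.
have [a_le a_ge] : a <= `|a| /\ - a <= `|a| by rewrite -[in X in _ /\ X]normrN !ler_norm.
have N0 : 0 <= - hv * (`|a| + a) by rewrite mulr_ge0 //; lra.
split; first by rewrite divr_ge0.
have [->|M_neq0] := eqVneq M 0.
  by rewrite invr0 mulr0 mul0r; apply: divr_ge0; lra.
have Mpos : 0 < M by rewrite lt_def M_neq0 M0.
rewrite mulrAC ler_pdivrMr //.
have N_le : - hv * (`|a| + a) <= - hv * (2 * `|a|) by rewrite ler_wpM2l; lra.
apply: le_trans (ler_wpM2l N0 (ler_norm b)) _.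
apply: le_trans (ler_wpM2r (normr_ge0 b) N_le) _.
have -> : - hv * (2 * `|a|) * `|b| = 2 * - hv / mu * (mu * `|b * a|).
  by rewrite normrM; field; rewrite gt_eqF.
by rewrite ler_wpM2l //; apply: divr_ge0; lra.
Qed.

End HybridParameter.

Lemma hfun_hybrid_lt0 {R : realType} {n m : nat} (JF : 'cV[R]_n -> 'M[R]_(m, n))
    (C : seq 'cV[R]_m) z u dp (mu a c : R) :
  C != [::] -> 2 < mu -> hfun JF C z u < 0 ->
  hfun JF C z (u + hybrid_beta mu (hfun JF C z u) a (hfun JF C z dp) c *: dp) < 0.
Proof.
move=> Cne mu2 hu0; have mu0 : 0 < mu by lra.
have [beta0 beta_le] := hybrid_beta_bound _ _ a (hfun JF C z dp) c mu0 hu0.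
set beta := hybrid_beta _ _ _ _ _ in beta0 beta_le *.
have := hfunD JF C Cne z u (beta *: dp); have := hfunZ JF C Cne z beta dp beta0.
have : 2 * - hfun JF C z u / mu < - hfun JF C z u by rewrite ltr_pdivrMr //; nra.
lra.
Qed.

Definition has_jacobian {R : realType} {n m : nat}
    (F : 'cV[R]_n -> 'cV[R]_m) (JF : 'cV[R]_n -> 'M[R]_(m, n)) :=
  forall z, differentiable F z /\ ('d F z : 'cV[R]_n -> 'cV[R]_m) = (fun u => JF z *m u).

Definition jacobian_lipschitz_on {R : realType} {n m : nat}
    (JF : 'cV[R]_n -> 'M[R]_(m, n)) (Lam : set 'cV[R]_n) (L : R) :=
  forall y z, Lam y -> Lam z -> forall u,
    enorm ((JF y - JF z) *m u) <= L * enorm (y - z) * enorm u.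

Section RayExpansion.
Context {R : realType} {n m : nat} {F : 'cV[R]_n -> 'cV[R]_m} {JF : 'cV[R]_n -> 'M[R]_(m, n)}.

Hypothesis dF : has_jacobian F JF.

Lemma is_derive_dot_ray (w : 'cV[R]_m) (x d : 'cV[R]_n) (s : R) :
  is_derive s 1 (fun s : R => dot w (F (x + s *: d))) (dot w (JF (x + s *: d) *m d)).
Proof.
pose dw u := dot w u.
have dw_lin : linear dw by move=> a u v; rewrite /dw dotDr dotZr.
pose dwL : {linear 'cV[R]_m -> R} := HB.pack dw (GRing.isLinear.Build _ _ _ _ dw dw_lin).
have dwc : continuous dw.
  apply: (@continuous_dot _ _ _ (fun=> w) id) => u; first exact: cst_continuous.
  exact: cvg_id.
pose ray (s : R) := x + s *: d.
have [ray_d ray_dE] : differentiable ray s /\ 'd ray s = (fun h => h *: d) :> (R -> _).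
  have [+ ->] := is_diffD (is_diff_cst x s) (is_diff_scalel s d).
  by split => //; apply/funext => h /=; rewrite add0r.
have [F_d F_dE] := dF (ray s).
have Fray_d : differentiable (F \o ray) s by exact: differentiable_comp.
have dwFray_d : differentiable (dwL \o (F \o ray)) s.
  by apply: differentiable_comp => //; exact: linear_differentiable.
suff -> : dot w (JF (x + s *: d) *m d) = 'D_1 (dwL \o (F \o ray)) s.
  by apply: derivableP; exact: diff_derivable.
have dwL_d : differentiable dwL ((F \o ray) s) by exact: linear_differentiable.
rewrite deriveE // (diff_comp Fray_d dwL_d) (@diff_lin R _ _ dwL _ dwc) /=.
rewrite (diff_comp ray_d F_d) /=.
by rewrite ray_dE F_dE scale1r.
Qed.

Lemma dot_ray_increment_le {Lam : set 'cV[R]_n} {L : R} (w : 'cV[R]_m) x d t :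
  jacobian_lipschitz_on JF Lam L -> 0 <= t -> (forall s, 0 <= s < t -> Lam (x + s *: d)) ->
  dot w (F (x + t *: d)) - dot w (F x) <=
    t * dot w (JF x *m d) + t ^+ 2 * (`|L| * enorm w * enorm d ^+ 2).
Proof.
move=> Lip t0 seg; have [->|t_neq0] := eqVneq t 0.
  by rewrite scale0r addr0 subrr !mul0r expr0n /= mul0r addr0.
have tpos : 0 < t by rewrite lt_def t_neq0 t0.
pose phi s := dot w (F (x + s *: d)).
have phi_d (s : R) : is_derive s (1 : R) phi (dot w (JF (x + s *: d) *m d)).
  exact: is_derive_dot_ray.
have phi_c : {within `[0, t], continuous phi}.
  by apply: derivable_within_continuous => s _; exact: ex_derive.
have [c c_in phi_mvt] := MVT tpos (fun s _ => phi_d s) phi_c.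
have [c0 ct] : 0 < c /\ c < t by rewrite !(itvP c_in).
have Lam_x : Lam x by have := seg 0; rewrite scale0r addr0 lexx; apply.
have Lam_c : Lam (x + c *: d) by apply: seg; rewrite (ltW c0).
have d_ge0 := enorm_ge0 d; have w_ge0 := enorm_ge0 w; have L_ge0 := normr_ge0 L.
have Jdiff_le : enorm ((JF (x + c *: d) - JF x) *m d) <= `|L| * t * enorm d ^+ 2.
  have := Lip _ _ Lam_c Lam_x d; rewrite addrAC subrr add0r enormZ gtr0_norm // => /le_trans.
  apply; rewrite expr2 !mulrA ler_wpM2r // -mulrA -[`|L| * t * _]mulrA.
  apply: le_trans (ler_wpM2r (mulr_ge0 (ltW c0) d_ge0) (ler_norm L)) _.
  by rewrite ler_wpM2l // ler_wpM2r // ltW.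
have -> : dot w (F x) = phi 0 by rewrite /phi scale0r addr0.
rewrite -/(phi t) phi_mvt subr0 -(subrK (JF x) (JF (x + c *: d))) mulmxDl dotDr mulrDl.
rewrite addrC mulrC lerD2l mulrC expr2 -mulrA ler_pM2l //.
apply: le_trans (cauchy_schwarz _ _) _.
by rewrite (_ : t * _ = enorm w * (`|L| * t * enorm d ^+ 2)); [exact: ler_wpM2l | ring].
Qed.

End RayExpansion.

Definition armijo_const {R : realType} {m : nat} (L : R) (C : seq 'cV[R]_m) : R :=
  (`|L| + 1) * (1 + \sum_(w <- C) enorm w).

Definition armijo_step_bound {R : realType} {n m : nat} (JF : 'cV[R]_n -> 'M[R]_(m, n))
    (C : seq 'cV[R]_m) (rho L : R) (x d : 'cV[R]_n) : R :=
  (1 - rho) / armijo_const L C * (- hfun JF C x d / enorm d ^+ 2).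

Section ArmijoSmallSteps.
Context {R : realType} {n m : nat} {K : set 'cV[R]_m} {C : seq 'cV[R]_m}
  {F : 'cV[R]_n -> 'cV[R]_m} {JF : 'cV[R]_n -> 'M[R]_(m, n)} {rho : R} {e : 'cV[R]_m}
  {Lam : set 'cV[R]_n} {L : R} {x0 : 'cV[R]_n}.
Hypotheses (fgK : finitely_generated_cone K) (Kcl : closed K)
  (Kdual : dual_cone K = cone_of (conv_hull C)) (dF : has_jacobian F JF)
  (rho_gt0 : 0 < rho) (rho_lt1 : rho < 1) (Ke : K e)
  (Ce : forall w, w \in C -> dot w e <= 1) (Lam_open : open Lam)
  (level_sub_Lam : forall z, preceqK K (F z) (F x0) -> Lam z)
  (Lip : jacobian_lipschitz_on JF Lam L).

Lemma armijo_preceqK {x d t} : armijo K F JF C rho e x d t -> 0 <= t ->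
  hfun JF C x d <= 0 -> preceqK K (F (x + t *: d)) (F x).
Proof.
move=> arm t0 h_le0; apply: (preceqK_trans fgK arm).
apply: (preceqK_addl_scale fgK) => //.
by rewrite -mulrA mulr_ge0_le0 ?(ltW rho_gt0) // mulr_ge0_le0.
Qed.

Let sum_enorm_ge0 : 0 <= \sum_(w <- C) enorm w.
Proof. by apply: sumr_ge0 => w _; exact: enorm_ge0. Qed.

Lemma armijo_const_gt0 : 0 < armijo_const L C.
Proof. by have := normr_ge0 L; have := sum_enorm_ge0; move=> *; apply: mulr_gt0; lra. Qed.

Lemma lipschitz_le_armijo_const w : w \in C -> `|L| * enorm w <= armijo_const L C.
Proof.
move=> wC; apply: ler_pM; rewrite ?normr_ge0 ?enorm_ge0 ?lerDl //.
rewrite (big_rem w wC) /= addrCA lerDl addr_ge0 //.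
by apply: sumr_ge0 => y _; exact: enorm_ge0.
Qed.

Lemma armijo_of_segment {x d t} : hfun JF C x d < 0 -> 0 <= t ->
  t * (armijo_const L C * enorm d ^+ 2) <= (1 - rho) * - hfun JF C x d ->
  (forall s, 0 <= s < t -> Lam (x + s *: d)) -> armijo K F JF C rho e x d t.
Proof.
move=> h_lt0 t0 t_small seg; apply: (bipolar fgK Kcl Kdual) => w wC.
have incr := dot_ray_increment_le dF w x d t Lip t0 seg.
have Jd_le : t * dot w (JF x *m d) <= t * hfun JF C x d.
  by rewrite ler_wpM2l // dotC hfun_ge.
have quad_le : t ^+ 2 * (`|L| * enorm w * enorm d ^+ 2) <= t * ((1 - rho) * - hfun JF C x d).
  have LwD : `|L| * enorm w * enorm d ^+ 2 <= armijo_const L C * enorm d ^+ 2.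
    apply: ler_wpM2r; [exact: sqr_ge0 | exact: lipschitz_le_armijo_const].
  by rewrite expr2 -mulrA; apply: ler_wpM2l => //; apply: le_trans t_small; exact: ler_wpM2l.
have e_le : rho * t * hfun JF C x d <= rho * t * hfun JF C x d * dot w e.
  rewrite -{1}(mulr1 (rho * t * _)) ler_wnM2l ?Ce //.
  by rewrite mulr_ge0_le0 ?mulr_ge0 ?(ltW rho_gt0) ?(ltW h_lt0).
rewrite dotBr dotDr dotZr; lra.
Qed.

Lemma le_armijo_step_bound {x d t} : d != 0 -> t <= armijo_step_bound JF C rho L x d ->
  t * (armijo_const L C * enorm d ^+ 2) <= (1 - rho) * - hfun JF C x d.
Proof.
move=> d0; have D0 : 0 < armijo_const L C * enorm d ^+ 2.
  by rewrite mulr_gt0 ?armijo_const_gt0 // enorm_sqr dot_gt0.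
by rewrite /armijo_step_bound mulf_div ler_pdivlMr.
Qed.

Lemma segment_in_Lam {x d} : preceqK K (F x) (F x0) -> hfun JF C x d < 0 -> d != 0 ->
  forall s, 0 <= s <= armijo_step_bound JF C rho L x d -> Lam (x + s *: d).
Proof.
(* s = sup of the steps whose segment stays in Lam; the Armijo condition at s puts
   x + s d in the level set, inside the open set Lam, so the segment extends past s
   unless s = T. *)
move=> x_lev h_lt0 d0; set T := armijo_step_bound JF C rho L x d.
have T_ge0 : 0 <= T.
  rewrite mulr_ge0 ?divr_ge0 ?sqr_ge0 ?(ltW armijo_const_gt0) ?oppr_ge0 ?(ltW h_lt0) //.
  by rewrite subr_ge0 ltW.
pose A := [set s | 0 <= s <= T /\ forall u, 0 <= u <= s -> Lam (x + u *: d)].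
have A0 : A 0.
  split=> [|u /andP[u0 u_le0]]; first by rewrite lexx T_ge0.
  have -> : u = 0 by apply/le_anti; rewrite u0 u_le0.
  by rewrite scale0r addr0; apply: level_sub_Lam.
have supA : has_sup A by split; [exists 0 | exists T => s [/andP[_ sT] _]].
set s := sup A.
have s0 : 0 <= s := sup_upper_bound supA A0.
have sT : s <= T by apply: ge_sup => [|y [/andP[_ yT] _]] //; exists 0.
have below_s u : 0 <= u < s -> Lam (x + u *: d).
  move=> /andP[u0 us]; have su : 0 < s - u by rewrite subr_gt0.
  have [a [_ a_seg]] := sup_adherent su supA; rewrite opprB addrC subrK => ua.
  by apply: a_seg; rewrite u0 ltW.
have at_s : Lam (x + s *: d).
  apply: level_sub_Lam; apply: (preceqK_trans fgK _ x_lev).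
  apply: (armijo_preceqK _ s0 (ltW h_lt0)).
  exact: armijo_of_segment h_lt0 s0 (le_armijo_step_bound d0 sT) below_s.
have sTe : s = T.
  apply/le_anti; rewrite sT leNgt; apply/negP => sT'.
  have [r r0 ray_Lam] := open_ray d Lam_open at_s.
  set eps := Num.min (T - s) (r / 2).
  have eps_gt0 : 0 < eps by rewrite lt_min subr_gt0 sT' divr_gt0.
  have [eps_le1 eps_le2] : eps <= T - s /\ eps <= r / 2 by rewrite /eps !ge_min !lexx orbT.
  have : A (s + eps).
    split=> [|u /andP[u0 us']]; first by apply/andP; split; lra.
    have [us|su] := ltP u s; first by apply: below_s; rewrite u0.
    rewrite -(subrK (s *: d) (u *: d)) addrCA addrC -scalerBl; apply: ray_Lam.
    rewrite ger0_norm ?subr_ge0 //; lra.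
  by move=> /(sup_upper_bound supA); rewrite -/s; lra.
move=> u /andP[u0 uT]; have [us|su] := ltP u s; first by apply: below_s; rewrite u0.
by rewrite (_ : u = s) //; apply/le_anti; rewrite su sTe uT.
Qed.

Lemma armijo_small_steps {x d} : preceqK K (F x) (F x0) -> hfun JF C x d < 0 -> d != 0 ->
  forall t, 0 <= t <= armijo_step_bound JF C rho L x d -> armijo K F JF C rho e x d t.
Proof.
move=> x_lev h_lt0 d0 t /andP[t0 tT].
apply: (armijo_of_segment h_lt0 t0 (le_armijo_step_bound d0 tT)) => s /andP[s0 st].
by apply: (segment_in_Lam x_lev h_lt0 d0); rewrite s0 (le_trans (ltW st) tT).
Qed.

End ArmijoSmallSteps.

Lemma backtracking_step_ge {R : realType} (P : R -> Prop) (delta c tau alpha : R) :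
  0 < delta < 1 -> 0 < c -> 0 < tau ->
  (forall t, 0 <= t <= c * tau -> P t) ->
  (forall j, P (delta ^+ j * tau) -> delta ^+ j * tau <= alpha) ->
  Num.min 1 (delta * c) * tau <= alpha.
Proof.
move=> /andP[delta0 delta1] c0 tau0 small largest.
have accept j : delta ^+ j <= c -> delta ^+ j * tau <= alpha.
  move=> djc; apply/largest/small.
  by rewrite mulr_ge0 ?exprn_ge0 ?(ltW delta0) ?(ltW tau0) //= ler_pM2r.
have [c_ge1|c_lt1] := leP 1 c.
  apply: le_trans (accept 0%N _); last by rewrite expr0.
  by rewrite expr0 ler_pM2r // ge_min lexx.
have [j0 dj0c] : exists j, delta ^+ j <= c.
  have /cvgr0_norm_lt/(_ _ c0)[N _ dN] : (GRing.exp delta : R^nat) @ \oo --> 0.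
    by apply: cvg_expr; rewrite ger0_norm ?(ltW delta0).
  by exists N; have := dN N (leqnn N); rewrite /= ger0_norm ?exprn_ge0 ?(ltW delta0) //; exact: ltW.
case: (ex_minnP (ex_intro (fun j => delta ^+ j <= c) j0 dj0c)) => -[|j] djc jmin.
  by move: djc; rewrite expr0 leNgt c_lt1.
have c_lt_dj : c < delta ^+ j by rewrite ltNge; apply/negP => /jmin; rewrite ltnn.
apply: le_trans (accept _ djc); rewrite exprS ler_pM2r // ge_min.
by rewrite ler_pM2l // (ltW c_lt_dj) orbT.
Qed.

Lemma nneseries_lty_of_telescoping {R : realType} (t a : nat -> R) (B : R) :
  (forall k, 0 <= t k) -> (forall k, t k <= a k - a k.+1) -> (forall k, B <= a k) ->
  (\sum_(0 <= k <oo) (t k)%:E < +oo)%E.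
Proof.
move=> t_ge0 t_le aB; apply: (@le_lt_trans _ _ (a 0%N - B)%:E); last exact: ltry.
apply: lime_le; first by apply: is_cvg_nneseries => k _ _; rewrite lee_fin.
apply: nearW => N; rewrite sumEFin lee_fin.
apply: le_trans (_ : a 0%N - a N <= _); last by rewrite lerD2l lerN2.
rewrite -opprB -(telescope_sumr _ (leq0n N)) -sumrN; apply: ler_sum => k _.
by rewrite opprB.
Qed.

Lemma armijo_dot_decrease {R : realType} {n m : nat} {K : set 'cV[R]_m} {C : seq 'cV[R]_m}
    {F : 'cV[R]_n -> 'cV[R]_m} {JF : 'cV[R]_n -> 'M[R]_(m, n)} {rho : R} {e w : 'cV[R]_m}
    {x d : 'cV[R]_n} {a : R} :
  dual_cone K w -> armijo K F JF C rho e x d a ->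
  rho * a * - hfun JF C x d * dot w e <= dot w (F x) - dot w (F (x + a *: d)).
Proof.
move=> Kw /Kw; rewrite dotBr dotDr dotZr.
by rewrite -[rho * a * hfun JF C x d]opprK -mulrN !mulNr; lra.
Qed.

Section ConjugateDirectionIterates.
Context {R : realType} {n m : nat} {K : set 'cV[R]_m} {C : seq 'cV[R]_m}
  {F : 'cV[R]_n -> 'cV[R]_m} {JF : 'cV[R]_n -> 'M[R]_(m, n)} {v : 'cV[R]_n -> 'cV[R]_n}
  {rho delta mu : R} {e : 'cV[R]_m} {Lam : set 'cV[R]_n} {L : R}
  {x d : nat -> 'cV[R]_n} {alpha beta : nat -> R}.
Hypotheses (fgK : finitely_generated_cone K) (Kcl : closed K)
  (Kdual : dual_cone K = cone_of (conv_hull C)) (dF : has_jacobian F JF)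
  (vmin : forall z u, hfun JF C z (v z) + 2^-1 * enorm (v z) ^+ 2
                      <= hfun JF C z u + 2^-1 * enorm u ^+ 2)
  (rho_gt0 : 0 < rho) (rho_lt1 : rho < 1) (delta_gt0 : 0 < delta) (delta_lt1 : delta < 1)
  (mu_gt2 : 2 < mu) (Ke : K e) (Ce : forall w, w \in C -> dot w e <= 1)
  (Lam_open : open Lam) (level_sub_Lam : forall z, preceqK K (F z) (F (x 0%N)) -> Lam z)
  (Lip : jacobian_lipschitz_on JF Lam L) (v_neq0 : forall k, v (x k) <> 0)
  (d0E : d 0%N = v (x 0%N))
  (betaE : forall k, beta k.+1 = hybrid_beta mu (hfun JF C (x k.+1) (v (x k.+1)))
     (hfun JF C (x k) (v (x k.+1))) (hfun JF C (x k.+1) (d k)) (hfun JF C (x k) (v (x k))))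
  (dE : forall k, d k.+1 = v (x k.+1) + beta k.+1 *: d k)
  (xE : forall k, x k.+1 = x k + alpha k *: d k)
  (alphaE : forall k, let tau := - hfun JF C (x k) (d k) / enorm (d k) ^+ 2 in
     (exists j : nat, alpha k = delta ^+ j * tau) /\
     armijo K F JF C rho e (x k) (d k) (alpha k) /\
     (forall j : nat, armijo K F JF C rho e (x k) (d k) (delta ^+ j * tau) ->
        delta ^+ j * tau <= alpha k))
  (bounded_below : forall D : nat -> 'cV[R]_m,
     (forall k, exists z, preceqK K (F z) (F (x 0%N)) /\ D k = F z) ->
     (forall k, preceqK K (D k.+1) (D k)) ->
     exists D0, forall k, preceqK K D0 (D k)).

Let C_neq_nil : C != [::] := dual_generators_neq_nil Kdual.

Lemma iterate_descent k : hfun JF C (x k) (d k) < 0.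
Proof.
have h_v j : hfun JF C (x j) (v (x j)) < 0.
  by apply: (hfun_argmin_lt0 _ _ C_neq_nil _ _ (vmin _)); apply/eqP.
by case: k => [|k]; rewrite ?d0E // dE betaE; apply: hfun_hybrid_lt0.
Qed.

Lemma iterate_dir_neq0 k : d k != 0.
Proof. by apply: contraTneq (iterate_descent k) => ->; rewrite hfun0 // ltxx. Qed.

Let tau_gt0 k : 0 < - hfun JF C (x k) (d k) / enorm (d k) ^+ 2.
Proof. by rewrite divr_gt0 ?oppr_gt0 ?iterate_descent // enorm_sqr dot_gt0 iterate_dir_neq0. Qed.

Lemma stepsize_ge0 k : 0 <= alpha k.
Proof. by have [[j ->] _] := alphaE k; rewrite mulr_ge0 ?exprn_ge0 ?ltW. Qed.

Lemma iterate_preceqK_step k : preceqK K (F (x k.+1)) (F (x k)).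
Proof.
rewrite xE; have [_ [arm _]] := alphaE k.
apply: (armijo_preceqK fgK rho_gt0 Ke arm (stepsize_ge0 k)).
exact: ltW (iterate_descent k).
Qed.

Lemma iterate_level k : preceqK K (F (x k)) (F (x 0%N)).
Proof.
elim: k => [|k IH]; first exact: preceqK_refl.
exact: (preceqK_trans fgK (iterate_preceqK_step k) IH).
Qed.

Let c_step := Num.min 1 (delta * ((1 - rho) / armijo_const L C)).

Lemma stepsize_ge k : c_step * (- hfun JF C (x k) (d k) / enorm (d k) ^+ 2) <= alpha k.
Proof.
have [_ [_ largest]] := alphaE k.
apply: backtracking_step_ge largest; rewrite ?delta_gt0 ?tau_gt0 //.
  by rewrite divr_gt0 ?subr_gt0 ?armijo_const_gt0.
exact: (armijo_small_steps fgK Kcl Kdual dF rho_gt0 rho_lt1 Ke Ce Lam_open level_sub_Lam Lip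
  (iterate_level k) (iterate_descent k) (iterate_dir_neq0 k)).
Qed.

Lemma iterate_dot_decrease w k : w \in C ->
  c_step * (rho * dot w e) * (hfun JF C (x k) (d k) ^+ 2 / enorm (d k) ^+ 2)
    <= dot w (F (x k)) - dot w (F (x k.+1)).
Proof.
move=> wC; have Kw : dual_cone K w by rewrite Kdual; exact: mem_cone_conv_hull.
have [_ [arm _]] := alphaE k.
rewrite xE; apply: le_trans (armijo_dot_decrease Kw arm).
have := stepsize_ge k; have := iterate_descent k; have := Kw e Ke.
set h := hfun JF C (x k) (d k); set D := enorm (d k) ^+ 2 => we_ge0 h_lt0 alpha_ge.
have -> : c_step * (rho * dot w e) * (h ^+ 2 / D) = c_step * (- h / D) * (- h * rho * dot w e).
  by rewrite expr2; ring.
have -> : rho * alpha k * - h * dot w e = alpha k * (- h * rho * dot w e) by ring.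
apply: ler_wpM2r alpha_ge.
by rewrite !mulr_ge0 ?oppr_ge0 ?(ltW h_lt0) ?(ltW rho_gt0).
Qed.

Lemma zoutendijk_series_lty w : w \in C -> 0 < dot w e ->
  (\sum_(0 <= k <oo) ((hfun JF C (x k) (d k) ^+ 2 / enorm (d k) ^+ 2)%:E) < +oo)%E.
Proof.
move=> wC we_gt0; have Kw : dual_cone K w by rewrite Kdual; exact: mem_cone_conv_hull.
have [D0 D0_le] := bounded_below (F \o x)
  (fun k => ex_intro _ (x k) (conj (iterate_level k) erefl)) iterate_preceqK_step.
pose c := c_step * (rho * dot w e).
have c_gt0 : 0 < c.
  by rewrite !mulr_gt0 // lt_min ltr01 mulr_gt0 // divr_gt0 ?subr_gt0 ?armijo_const_gt0.
apply: (nneseries_lty_of_telescoping _ (fun k => dot w (F (x k)) / c) (dot w D0 / c)).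
- by move=> k; rewrite divr_ge0 ?sqr_ge0.
- by move=> k; rewrite /= -mulrBl ler_pdivlMr // [_ * c]mulrC; exact: iterate_dot_decrease.
- by move=> k; rewrite ler_pM2r ?invr_gt0 // -subr_ge0 -dotBr; apply: Kw; exact: D0_le.
Qed.

End ConjugateDirectionIterates.

Theorem mainTheorem3 (R : realType) (n m : nat)
  (K : set 'cV[R]_m) (C : seq 'cV[R]_m)
  (F : 'cV[R]_n -> 'cV[R]_m) (JF : 'cV[R]_n -> 'M[R]_(m, n))
  (v : 'cV[R]_n -> 'cV[R]_n)
  (rho delta mu : R) (e : 'cV[R]_m)
  (x d : nat -> 'cV[R]_n) (alpha beta : nat -> R) :
  (* K: pointed, closed, convex cone, nonempty interior, finitely generated *)
  pointed_cone K -> closed K -> is_convex_set K -> (interior K !=set0) ->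
  finitely_generated_cone K ->
  (* C finite, 0 \notin C, K^* = cone(conv C) *)
  (0 \notin C) -> dual_cone K = cone_of (conv_hull C) ->
  (* F continuously differentiable with Jacobian JF *)
  (forall z, differentiable F z /\ ('d F z : 'cV[R]_n -> 'cV[R]_m) = (fun u => JF z *m u)) ->
  continuous JF ->
  (* v(z) = argmin_u { h(z,u) + 1/2 |u|^2 } *)
  (forall z u, hfun JF C z (v z) + 2^-1 * enorm (v z) ^+ 2
               <= hfun JF C z u + 2^-1 * enorm u ^+ 2) ->
  0 < rho < 1 -> 0 < delta < 1 -> 2 < mu ->
  interior K e -> (forall w, w \in C -> dot w e <= 1) ->
  (* (A1) *)
  (exists Lam : set 'cV[R]_n, open Lam /\
     [set z | preceqK K (F z) (F (x 0%N))] `<=` Lam /\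
     exists L : R, forall y z, Lam y -> Lam z -> forall u,
       enorm ((JF y - JF z) *m u) <= L * enorm (y - z) * enorm u) ->
  (* (A2) *)
  (forall D : nat -> 'cV[R]_m,
     (forall k, exists z, preceqK K (F z) (F (x 0%N)) /\ D k = F z) ->
     (forall k, preceqK K (D k.+1) (D k)) ->
     exists D0, forall k, preceqK K D0 (D k)) ->
  (* the sequence is infinite *)
  (forall k, v (x k) <> 0) ->
  (* the algorithm *)
  d 0%N = v (x 0%N) ->
  (forall k, beta k.+1 =
     (- hfun JF C (x k.+1) (v (x k.+1)) *
        (`|hfun JF C (x k) (v (x k.+1))| + hfun JF C (x k) (v (x k.+1))))
     / Num.max (mu * `|hfun JF C (x k.+1) (d k) * hfun JF C (x k) (v (x k.+1))|)
               (- mu * hfun JF C (x k) (v (x k)) * `|hfun JF C (x k) (v (x k.+1))|)) ->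
  (forall k, d k.+1 = v (x k.+1) + beta k.+1 *: d k) ->
  (forall k, x k.+1 = x k + alpha k *: d k) ->
  (forall k, let tau := - hfun JF C (x k) (d k) / enorm (d k) ^+ 2 in
     (exists j : nat, alpha k = delta ^+ j * tau) /\
     armijo K F JF C rho e (x k) (d k) (alpha k) /\
     (forall j : nat, armijo K F JF C rho e (x k) (d k) (delta ^+ j * tau) ->
        delta ^+ j * tau <= alpha k)) ->
  (\sum_(0 <= k <oo) ((hfun JF C (x k) (d k) ^+ 2 / enorm (d k) ^+ 2)%:E) < +oo)%E.
Proof.
move=> _ Kcl _ _ fgK C0 Kdual dF _ vmin /andP[rho_gt0 rho_lt1] /andP[delta_gt0 delta_lt1]
  mu_gt2 e_int Ce [Lam [Lam_open [level_sub_Lam [L Lip]]]] bounded_below v_neq0 d0E betaE dE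
  xE alphaE.
have Ke : K e := interior_subset e_int.
have [w wC we_gt0] := dual_generator_dot_interior_gt0 Kdual C0 e_int.
exact: (zoutendijk_series_lty fgK Kcl Kdual dF vmin rho_gt0 rho_lt1 delta_gt0 delta_lt1 mu_gt2
  Ke Ce Lam_open level_sub_Lam Lip v_neq0 d0E betaE dE xE alphaE bounded_below w wC we_gt0).
Qed.
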